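(* Assume the standing setting below with $I\ge 2$ and fix arbitrary parameters $0<\beta\le 1$, $\lambda\ge 1$, $0<\mu\le 1$. (i) (High reference point $R_p=0$.) The supremum of $U(b,\cdot)$ over $[0,\infty)$ is attained, and it is attained at some point of the finite set $\{d_i-Q:\ i=\hat\imath+1,\ldots,I\}\cup\{0\}$; i.e. an optimal buying quantity is $$q_b^*=\arg\max_{q_b\in\{d_i-Q,\ i=\hat\imath+1,\ldots,I\}\cup\{0\}} U(b,q_b).$$ (ii) (Low reference point $R_p=\kappa(Q-d_I)$.) Let $\mathcal X_b$ be the set of points $q_b>0$ at which $U(b,\cdot)$ (computed with $R_p=\kappa(Q-d_I)$) is differentiable with $\partial U(b,q_b)/\partial q_b=0$. Then the supremum of $U(b,\cdot)$ over $[0,\infty)$ is attained at some point of $\{d_i-Q:\ i=\hat\imath+1,\ldots,I\}\cup\mathcal X_b\cup\{0\}$; i.e. $$q_b^*=\arg\max_{q_b\in\{d_i-Q,\ i=\hat\imath+1,\ldots,I\}\cup\mathcal X_b\cup\{0\}} U(b,q_b).$$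
   Context: Standing setting. Let $\kappa>0$ and $Q>0$. The future demand $d$ takes values $d_1<d_2<\cdots<d_I$ ($I\ge2$) with $\mathbb P(d=d_i)=p_i>0$, $\sum_i p_i=1$, and $d_1<Q<d_I$; let $\hat\imath$ be the index with $d_{\hat\imath}<Q\le d_{\hat\imath+1}$. The satisfaction loss is $L(y)=0$ if $y\ge0$ and $L(y)=\kappa y$ if $y<0$. For parameters $0<\beta\le1$, $\lambda\ge1$, the value function is $v(x)=x^\beta$ for $x\ge0$ and $v(x)=-\lambda(-x)^\beta$ for $x<0$. For $0<\mu\le1$ the probability weighting is $w(p)=\exp(-(-\ln p)^\mu)$ for $p\in(0,1]$. Prices satisfy $0<\pi_s^{\min}<\kappa$ and $0<\pi_b^{\max}<\kappa$. For a reference point $R_p\in\mathbb R$, the buyer's utility of buying $q_b\ge0$ is $U(b,q_b)=\sum_{i=1}^I w(p_i)\,v\big(-\pi_s^{\min}q_b+L(Q+q_b-d_i)-R_p\big)$ and the seller's utility of selling $q_s\ge0$ is $U(s,q_s)=\sum_{i=1}^I w(p_i)\,v\big(\pi_b^{\max}q_s+L(Q-q_s-d_i)-R_p\big)$. *)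

From Stdlib Require Import Reals Lra List.
Open Scope R_scope.

(* Real power x^b for x >= 0, with the convention 0^b = 0 (b > 0).
   (Stdlib's Rpower 0 b = exp (b * ln 0) = 1, so we special-case 0.) *)
Definition pw (x b : R) : R :=
  if Rlt_dec 0 x then Rpower x b else 0.

Definition Lsat (kappa y : R) : R :=
  if Rle_dec 0 y then 0 else kappa * y.

Definition vfun (beta lambda x : R) : R :=
  if Rle_dec 0 x then pw x beta else - lambda * pw (- x) beta.

Definition wfun (mu p : R) : R := exp (- pw (- ln p) mu).

Definition sumI (n : nat) (f : nat -> R) : R :=
  fold_right Rplus 0 (map f (seq 0 n)).

(* Buyer's utility U(b, q_b); demand values d 0 < ... < d (I-1),
   probabilities p 0, ..., p (I-1) (0-based indexing). *)
Definition Ubuy (kappa Q : R) (I : nat) (d p : nat -> R)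
  (beta lambda mu pis Rp : R) (qb : R) : R :=
  sumI I (fun i => wfun mu (p i) *
     vfun beta lambda (- pis * qb + Lsat kappa (Q + qb - d i) - Rp)).

From Stdlib Require Import Reals Lra Lia List.
Open Scope R_scope.

(* The kinks of q_b |-> L(Q + q_b - d_i) sit at q_b = d_i - Q; they cut [0, d_I - Q]
   into pieces on which every argument of v is affine in q_b, while beyond d_I - Q
   the loss vanishes and U(b, .) is nonincreasing.  For R_p = 0 all arguments are
   nonpositive, where v is convex because x^beta is concave; so U(b, .) lies below
   its chords on each piece and peaks at an endpoint.  For R_p = kappa (Q - d_I) no
   argument vanishes inside a piece, so U(b, .) is differentiable there and its
   maximum on a piece sits at an endpoint or at a critical point. *)

Lemma ln_le_sub_1 y : 0 < y -> ln y <= y - 1.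
Proof. intros Hy. pose proof (exp_ineq1_le (ln y)). rewrite exp_ln in *; lra. Qed.

Lemma Rpower_le_tangent_1 s b : 0 < s -> 0 < b <= 1 -> Rpower s b <= 1 + b * (s - 1).
Proof.
  intros Hs Hb. set (m := 1 + b * (s - 1)).
  assert (Hm : 0 < m) by (unfold m; nra).
  assert (Hs_m : ln s - ln m <= s / m - 1).
  { replace (ln s - ln m) with (ln (s / m))
      by (unfold Rdiv; rewrite ln_mult, ln_Rinv by (try apply Rinv_0_lt_compat; lra); ring).
    apply ln_le_sub_1, Rdiv_lt_0_compat; lra. }
  assert (H1_m : - ln m <= / m - 1).
  { rewrite <- ln_Rinv by lra. apply ln_le_sub_1, Rinv_0_lt_compat; lra. }
  (* weighted AM-GM: the two bounds above, weighted by b and 1 - b, sum to 0 *)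
  assert (Hweighted : b * ln s <= ln m).
  { assert (b * (s / m - 1) + (1 - b) * (/ m - 1) = 0) by (unfold m in *; field; lra).
    nra. }
  unfold Rpower. rewrite <- (exp_ln m) by lra.
  destruct (Rle_lt_or_eq_dec _ _ Hweighted) as [Hlt | ->];
    [left; apply exp_increasing | right]; easy.
Qed.

Lemma pw_pos x b : 0 < x -> pw x b = Rpower x b.
Proof. intros Hx; unfold pw; destruct (Rlt_dec 0 x); [reflexivity | lra]. Qed.

Lemma pw_nonpos x b : x <= 0 -> pw x b = 0.
Proof. intros Hx; unfold pw; destruct (Rlt_dec 0 x); [lra | reflexivity]. Qed.

Lemma pw_ge0 x b : 0 <= pw x b.
Proof. unfold pw; destruct (Rlt_dec 0 x); [left; apply exp_pos | lra]. Qed.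

Lemma pw_le_compat x y b : 0 < b -> x <= y -> pw x b <= pw y b.
Proof.
  intros Hb Hxy. destruct (Rle_dec x 0).
  - rewrite (pw_nonpos x) by lra. apply pw_ge0.
  - rewrite !pw_pos by lra. apply Rle_Rpower_l; lra.
Qed.

Lemma pw_le_tangent x z b : 0 <= x -> 0 < z -> 0 < b <= 1 ->
  pw x b <= pw z b + b * pw z b / z * (x - z).
Proof.
  intros Hx Hz Hb. rewrite (pw_pos z) by lra.
  assert (Hzb : 0 < Rpower z b) by apply exp_pos.
  destruct (Rle_lt_or_eq_dec 0 x Hx) as [Hx' | <-].
  - rewrite pw_pos by lra.
    replace x with (x / z * z) at 1 by (field; lra).
    rewrite <- Rpower_mult_distr by (try apply Rdiv_lt_0_compat; lra).
    pose proof (Rpower_le_tangent_1 (x / z) b ltac:(apply Rdiv_lt_0_compat; lra) Hb).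
    replace (Rpower z b + b * Rpower z b / z * (x - z))
      with ((1 + b * (x / z - 1)) * Rpower z b) by (field; lra).
    apply Rmult_le_compat_r; lra.
  - rewrite pw_nonpos by lra.
    replace (Rpower z b + b * Rpower z b / z * (0 - z)) with ((1 - b) * Rpower z b)
      by (field; lra).
    nra.
Qed.

Lemma pw_concave u w t b : 0 <= u -> 0 <= w -> 0 <= t <= 1 -> 0 < b <= 1 ->
  t * pw u b + (1 - t) * pw w b <= pw (t * u + (1 - t) * w) b.
Proof.
  intros Hu Hw Ht Hb. set (z := t * u + (1 - t) * w).
  assert (Htu : 0 <= t * u) by nra.
  assert (Htw : 0 <= (1 - t) * w) by nra.
  destruct (Rle_lt_or_eq_dec 0 z ltac:(unfold z; lra)) as [Hz | Hz].
  - pose proof (pw_le_tangent u z b Hu Hz Hb).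
    pose proof (pw_le_tangent w z b Hw Hz Hb).
    set (K := b * pw z b / z) in *.
    assert (t * pw u b <= t * (pw z b + K * (u - z))) by (apply Rmult_le_compat_l; lra).
    assert ((1 - t) * pw w b <= (1 - t) * (pw z b + K * (w - z)))
      by (apply Rmult_le_compat_l; lra).
    assert (t * (pw z b + K * (u - z)) + (1 - t) * (pw z b + K * (w - z)) = pw z b)
      by (unfold z; ring).
    lra.
  - assert (Hvanish : forall s y, 0 <= s -> 0 <= y -> s * y = 0 -> s * pw y b = 0).
    { intros s y Hs Hy Hsy. destruct (Rmult_integral _ _ Hsy) as [-> | ->]; [ring |].
      rewrite pw_nonpos by lra. ring. }
    rewrite <- Hz, (pw_nonpos 0), (Hvanish t u), (Hvanish (1 - t) w) by (unfold z in Hz; lra).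
    lra.
Qed.

Lemma vfun_split b lam x : vfun b lam x = pw x b - lam * pw (- x) b.
Proof.
  unfold vfun. destruct (Rle_dec 0 x).
  - rewrite (pw_nonpos (- x)) by lra. ring.
  - rewrite (pw_nonpos x) by lra. ring.
Qed.

Lemma vfun_le_compat b lam x y : 0 < b -> 0 <= lam -> x <= y -> vfun b lam x <= vfun b lam y.
Proof.
  intros Hb Hlam Hxy. rewrite !vfun_split.
  pose proof (pw_le_compat x y b Hb Hxy).
  pose proof (pw_le_compat (- y) (- x) b Hb ltac:(lra)).
  nra.
Qed.

Lemma vfun_convex_nonpos b lam x y t : 0 < b <= 1 -> 0 <= lam -> x <= 0 -> y <= 0 ->
  0 <= t <= 1 ->
  vfun b lam (t * x + (1 - t) * y) <= t * vfun b lam x + (1 - t) * vfun b lam y.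
Proof.
  intros Hb Hlam Hx Hy Ht. rewrite !vfun_split.
  rewrite (pw_nonpos (t * x + (1 - t) * y)), (pw_nonpos x), (pw_nonpos y) by nra.
  replace (- (t * x + (1 - t) * y)) with (t * - x + (1 - t) * - y) by ring.
  pose proof (pw_concave (- x) (- y) t b ltac:(lra) ltac:(lra) Ht Hb).
  nra.
Qed.

Lemma Lsat_of_nonneg k y : 0 <= y -> Lsat k y = 0.
Proof. intros Hy; unfold Lsat; destruct (Rle_dec 0 y); lra. Qed.

Lemma Lsat_of_nonpos k y : y <= 0 -> Lsat k y = k * y.
Proof.
  intros Hy; unfold Lsat; destruct (Rle_dec 0 y); [replace y with 0 by lra; ring | reflexivity].
Qed.

Lemma Lsat_le0 k y : 0 < k -> Lsat k y <= 0.
Proof. intros Hk; unfold Lsat; destruct (Rle_dec 0 y); nra. Qed.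

Lemma Lsat_abs k y : Lsat k y = k * (y - Rabs y) / 2.
Proof.
  unfold Lsat. destruct (Rle_dec 0 y).
  - rewrite Rabs_right by lra. field.
  - rewrite Rabs_left by lra. field.
Qed.

Lemma wfun_pos mu q : 0 < wfun mu q.
Proof. apply exp_pos. Qed.

Lemma sumI_le n f g : (forall i, (i < n)%nat -> f i <= g i) -> sumI n f <= sumI n g.
Proof.
  intros Hfg. unfold sumI.
  assert (Hin : forall i, In i (seq 0 n) -> f i <= g i)
    by (intros i Hi; apply in_seq in Hi; apply Hfg; lia).
  clear Hfg. induction (seq 0 n) as [| a l IH]; simpl; [lra |].
  pose proof (Hin a (or_introl eq_refl)).
  assert (fold_right Rplus 0 (map f l) <= fold_right Rplus 0 (map g l))
    by (apply IH; intros; apply Hin; simpl; auto).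
  lra.
Qed.

Lemma sumI_linear n f g x y :
  sumI n (fun i => x * f i + y * g i) = x * sumI n f + y * sumI n g.
Proof. unfold sumI. induction (seq 0 n) as [| a l IH]; simpl; [| rewrite IH]; ring. Qed.

Lemma continuity_pt_sumI n (F : nat -> R -> R) x :
  (forall i, (i < n)%nat -> continuity_pt (F i) x) ->
  continuity_pt (fun q => sumI n (fun i => F i q)) x.
Proof.
  intros HF. unfold sumI.
  assert (Hin : forall i, In i (seq 0 n) -> continuity_pt (F i) x)
    by (intros i Hi; apply in_seq in Hi; apply HF; lia).
  clear HF. induction (seq 0 n) as [| a l IH]; simpl.
  - apply continuity_pt_const; intros ? ?; reflexivity.
  - apply (continuity_pt_plus (F a) (fun q => fold_right Rplus 0 (map (fun i => F i q) l))).
    + apply Hin; simpl; auto.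
    + apply IH; intros; apply Hin; simpl; auto.
Qed.

Lemma derivable_pt_sumI n (F : nat -> R -> R) x :
  (forall i, (i < n)%nat -> derivable_pt (F i) x) ->
  derivable_pt (fun q => sumI n (fun i => F i q)) x.
Proof.
  intros HF. unfold sumI.
  assert (Hin : forall i, In i (seq 0 n) -> derivable_pt (F i) x)
    by (intros i Hi; apply in_seq in Hi; apply HF; lia).
  clear HF. induction (seq 0 n) as [| a l IH]; simpl.
  - apply derivable_pt_const.
  - apply (derivable_pt_plus (F a) (fun q => fold_right Rplus 0 (map (fun i => F i q) l))).
    + apply Hin; simpl; auto.
    + apply IH; intros; apply Hin; simpl; auto.
Qed.

Lemma continuity_pt_ext (f g : R -> R) x :
  (forall y, f y = g y) -> continuity_pt f x -> continuity_pt g x.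
Proof. intros Hfg. apply (continuity_pt_locally_ext f g 1 x Rlt_0_1); auto. Qed.

Lemma derivable_pt_ext (f g : R -> R) x :
  (forall y, f y = g y) -> derivable_pt f x -> derivable_pt g x.
Proof. intros Hfg [l Hl]. exists l. exact (derivable_pt_lim_ext f g x l Hfg Hl). Qed.

Lemma pw_derivable_pt b x : x <> 0 -> derivable_pt (fun y => pw y b) x.
Proof.
  intros Hx. destruct (Rlt_dec x 0) as [Hneg | Hpos].
  - exists 0. apply (derivable_pt_lim_locally_ext (fun _ => 0) _ x (x - 1) 0); [lra | |].
    + intros z Hz. symmetry. apply pw_nonpos. lra.
    + apply derivable_pt_lim_const.
  - exists (b * Rpower x (b - 1)).
    apply (derivable_pt_lim_locally_ext (fun y => Rpower y b) _ x 0 (x + 1)); [lra | |].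
    + intros z Hz. symmetry. apply pw_pos. lra.
    + apply derivable_pt_lim_power; lra.
Qed.

Lemma pw_continuity_pt b x : 0 < b -> continuity_pt (fun y => pw y b) x.
Proof.
  intros Hb. destruct (Req_dec x 0) as [-> | Hx].
  2: apply derivable_continuous_pt, pw_derivable_pt; exact Hx.
  intros eps Heps. exists (Rpower eps (/ b)). split; [apply exp_pos |].
  intros y [_ Hy]. simpl in *. unfold R_dist in *.
  rewrite (pw_nonpos 0), Rminus_0_r, Rabs_right by (try apply Rle_ge, pw_ge0; lra).
  rewrite Rminus_0_r in Hy. destruct (Rle_dec y 0); [rewrite pw_nonpos; lra |].
  rewrite pw_pos by lra. apply Rabs_def2 in Hy.
  replace eps with (Rpower (Rpower eps (/ b)) b)
    by (rewrite Rpower_mult, Rinv_l, Rpower_1; lra).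
  apply Rlt_Rpower_l; lra.
Qed.

Lemma vfun_continuity_pt b lam x : 0 < b -> continuity_pt (vfun b lam) x.
Proof.
  intros Hb. apply (continuity_pt_ext (fun y => pw y b - lam * pw (- y) b));
    [intros; symmetry; apply vfun_split |].
  apply (continuity_pt_minus (fun y => pw y b) (fun y => lam * pw (- y) b)).
  - apply pw_continuity_pt; exact Hb.
  - apply (continuity_pt_scal (fun y => pw (- y) b)).
    apply (continuity_pt_comp Ropp (fun y => pw y b)).
    + apply derivable_continuous_pt; reg.
    + apply pw_continuity_pt; exact Hb.
Qed.

Lemma vfun_derivable_pt b lam x : x <> 0 -> derivable_pt (vfun b lam) x.
Proof.
  intros Hx. apply (derivable_pt_ext (fun y => pw y b - lam * pw (- y) b));
    [intros; symmetry; apply vfun_split |].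
  apply (derivable_pt_minus (fun y => pw y b) (fun y => lam * pw (- y) b)).
  - apply pw_derivable_pt; exact Hx.
  - apply (derivable_pt_scal (fun y => pw (- y) b)).
    apply (derivable_pt_comp Ropp (fun y => pw y b)); [reg |].
    apply pw_derivable_pt; lra.
Qed.

Lemma Lsat_continuity_pt k x : continuity_pt (Lsat k) x.
Proof.
  apply (continuity_pt_ext (fun y => k * (y - Rabs y) / 2)); [intros; symmetry; apply Lsat_abs |].
  apply (continuity_pt_mult (fun y => k * (y - Rabs y)) (fun _ => / 2)).
  - apply (continuity_pt_scal (fun y => y - Rabs y)).
    apply (continuity_pt_minus id Rabs); [apply derivable_continuous_pt; reg | apply Rcontinuity_abs].
  - apply continuity_pt_const; intros ? ?; reflexivity.
Qed.

Lemma Lsat_derivable_pt k x : x <> 0 -> derivable_pt (Lsat k) x.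
Proof.
  intros Hx.
  apply (derivable_pt_ext (fun y => k * (y - Rabs y) / 2)); [intros; symmetry; apply Lsat_abs |].
  apply (derivable_pt_mult (fun y => k * (y - Rabs y)) (fun _ => / 2)).
  - apply (derivable_pt_scal (fun y => y - Rabs y)).
    apply (derivable_pt_minus id Rabs); [reg | apply Rderivable_pt_abs; exact Hx].
  - apply derivable_pt_const.
Qed.

Lemma argmax_union (f : R -> R) (P A B : R -> Prop) c1 c2 : P c1 -> P c2 ->
  (forall q, A q -> f q <= f c1) -> (forall q, B q -> f q <= f c2) ->
  exists c, P c /\ forall q, A q \/ B q -> f q <= f c.
Proof.
  intros HP1 HP2 HA HB. destruct (Rle_dec (f c1) (f c2)).
  - exists c2. split; [exact HP2 |]. intros q [Hq | Hq]; [specialize (HA q Hq); lra | auto].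
  - exists c1. split; [exact HP1 |]. intros q [Hq | Hq]; [auto | specialize (HB q Hq); lra].
Qed.

Lemma argmax_endpoint_of_below_chords (f : R -> R) a b : a <= b ->
  (forall t, 0 <= t <= 1 -> f (t * a + (1 - t) * b) <= t * f a + (1 - t) * f b) ->
  exists c, (c = a \/ c = b) /\ forall q, a <= q <= b -> f q <= f c.
Proof.
  intros Hab Hchord.
  assert (Hmax : forall q, a <= q <= b -> f q <= Rmax (f a) (f b)).
  { intros q Hq. pose proof (Rmax_l (f a) (f b)). pose proof (Rmax_r (f a) (f b)).
    destruct (Req_dec a b) as [<- | Hne]; [replace q with a by lra; lra |].
    set (t := (b - q) / (b - a)).
    assert (Ht_def : t * (b - a) = b - q) by (unfold t; field; lra).
    assert (Ht : 0 <= t <= 1) by (clearbody t; nra).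
    replace q with (t * a + (1 - t) * b) by lra.
    specialize (Hchord t Ht). nra. }
  unfold Rmax in Hmax. destruct (Rle_dec (f a) (f b)); eauto.
Qed.

Lemma argmax_endpoint_or_critical (f : R -> R) a b : a <= b ->
  (forall x, a <= x <= b -> continuity_pt f x) -> (forall x, a < x < b -> derivable_pt f x) ->
  exists c, (c = a \/ c = b \/ (a < c < b /\ derivable_pt_lim f c 0)) /\
    forall q, a <= q <= b -> f q <= f c.
Proof.
  intros Hab Hcont Hder.
  destruct (continuity_ab_maj f a b Hab Hcont) as [c [Hmax Hc]].
  exists c. split; [| exact Hmax].
  destruct (Req_dec c a) as [-> | Hca]; [now left |].
  destruct (Req_dec c b) as [-> | Hcb]; [now right; left |].
  right; right. split; [lra |].
  destruct (Hder c ltac:(lra)) as [l Hl].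
  assert (Hl0 : l = 0).
  { apply (deriv_maximum f a b c (exist _ l Hl)); [lra | lra |].
    intros x Hax Hxb. apply Hmax; lra. }
  subst l. exact Hl.
Qed.

Definition no_kink (d : nat -> R) (Q : R) (I : nat) (a b : R) : Prop :=
  forall i, (i < I)%nat -> d i - Q <= a \/ b <= d i - Q.

Section BuyerUtility.

Variables (kappa Q : R) (I : nat) (d p : nat -> R) (beta lam mu pis : R).
Hypotheses (Hkappa : 0 < kappa) (Hpis : 0 < pis < kappa) (Hbeta : 0 < beta <= 1)
  (Hlam : 0 <= lam).

Local Notation U := (Ubuy kappa Q I d p beta lam mu pis).

Lemma Ubuy_continuity_pt Rp x : continuity_pt (U Rp) x.
Proof.
  apply (continuity_pt_sumI I
    (fun i q => wfun mu (p i) * vfun beta lam (- pis * q + Lsat kappa (Q + q - d i) - Rp))).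
  intros i _. apply continuity_pt_scal.
  apply (continuity_pt_comp (fun q => - pis * q + Lsat kappa (Q + q - d i) - Rp));
    [| apply vfun_continuity_pt; lra].
  apply (continuity_pt_minus (fun q => - pis * q + Lsat kappa (Q + q - d i)) (fun _ => Rp));
    [| apply continuity_pt_const; intros ? ?; reflexivity].
  apply (continuity_pt_plus (fun q => - pis * q) (fun q => Lsat kappa (Q + q - d i)));
    [apply derivable_continuous_pt; reg |].
  apply (continuity_pt_comp (fun q => Q + q - d i));
    [apply derivable_continuous_pt; reg | apply Lsat_continuity_pt].
Qed.

Lemma Ubuy_derivable_pt Rp x :
  (forall i, (i < I)%nat -> - pis * x + Lsat kappa (Q + x - d i) - Rp <> 0 /\ Q + x - d i <> 0) ->
  derivable_pt (U Rp) x.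
Proof.
  intros Hx.
  apply (derivable_pt_sumI I
    (fun i q => wfun mu (p i) * vfun beta lam (- pis * q + Lsat kappa (Q + q - d i) - Rp))).
  intros i Hi. destruct (Hx i Hi) as [Harg Hkink]. apply derivable_pt_scal.
  apply (derivable_pt_comp (fun q => - pis * q + Lsat kappa (Q + q - d i) - Rp));
    [| apply vfun_derivable_pt; exact Harg].
  apply (derivable_pt_minus (fun q => - pis * q + Lsat kappa (Q + q - d i)) (fun _ => Rp));
    [| apply derivable_pt_const].
  apply (derivable_pt_plus (fun q => - pis * q) (fun q => Lsat kappa (Q + q - d i))); [reg |].
  apply (derivable_pt_comp (fun q => Q + q - d i)); [reg | apply Lsat_derivable_pt; exact Hkink].
Qed.

Lemma Ubuy_nonincreasing_beyond_kinks Rp B q :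
  (forall i, (i < I)%nat -> d i - Q <= B) -> B <= q -> U Rp q <= U Rp B.
Proof.
  intros HB Hq. apply sumI_le. intros i Hi.
  pose proof (HB i Hi). rewrite !Lsat_of_nonneg by lra.
  apply Rmult_le_compat_l; [left; apply wfun_pos |].
  apply vfun_le_compat; nra.
Qed.

Lemma Ubuy_below_chords a b t : 0 <= a <= b -> no_kink d Q I a b -> 0 <= t <= 1 ->
  U 0 (t * a + (1 - t) * b) <= t * U 0 a + (1 - t) * U 0 b.
Proof.
  intros Hab Hkinks Ht. unfold Ubuy. rewrite <- sumI_linear. apply sumI_le. intros i Hi.
  set (x := - pis * a + Lsat kappa (Q + a - d i) - 0).
  set (y := - pis * b + Lsat kappa (Q + b - d i) - 0).
  assert (Haffine : - pis * (t * a + (1 - t) * b) + Lsat kappa (Q + (t * a + (1 - t) * b) - d i) - 0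
                    = t * x + (1 - t) * y).
  { unfold x, y. destruct (Hkinks i Hi).
    - rewrite !Lsat_of_nonneg by nra. ring.
    - rewrite !Lsat_of_nonpos by nra. ring. }
  rewrite Haffine.
  pose proof (Lsat_le0 kappa (Q + a - d i) Hkappa).
  pose proof (Lsat_le0 kappa (Q + b - d i) Hkappa).
  pose proof (vfun_convex_nonpos beta lam x y t Hbeta Hlam ltac:(unfold x; nra)
                ltac:(unfold y; nra) Ht).
  pose proof (wfun_pos mu (p i)).
  nra.
Qed.

Lemma Ubuy_argmax_piece_high a b : 0 <= a <= b -> no_kink d Q I a b ->
  exists c, (c = a \/ c = b) /\ forall q, a <= q <= b -> U 0 q <= U 0 c.
Proof.
  intros Hab Hkinks. apply argmax_endpoint_of_below_chords; [lra |].
  intros t Ht. apply Ubuy_below_chords; assumption.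
Qed.

Lemma Ubuy_argmax_piece_low D a b : (forall i, (i < I)%nat -> d i <= D) ->
  0 <= a <= b -> b <= D - Q -> no_kink d Q I a b ->
  exists c, (c = a \/ c = b \/ (a < c < b /\ derivable_pt_lim (U (kappa * (Q - D))) c 0)) /\
    forall q, a <= q <= b -> U (kappa * (Q - D)) q <= U (kappa * (Q - D)) c.
Proof.
  intros HD Hab HbD Hkinks. apply argmax_endpoint_or_critical; [lra | |].
  - intros x _. apply Ubuy_continuity_pt.
  - intros x Hx. apply Ubuy_derivable_pt. intros i Hi.
    pose proof (HD i Hi).
    (* before the kink the argument is kappa (D - Q) - pis x, after it
       (kappa - pis) x + kappa (D - d_i); both are positive *)
    destruct (Hkinks i Hi).
    + rewrite Lsat_of_nonneg by lra. split; nra.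
    + rewrite Lsat_of_nonpos by lra. split; nra.
Qed.

End BuyerUtility.

Lemma strictly_increasing_le (f : nat -> R) n i j :
  (forall i j, (i < j)%nat -> (j < n)%nat -> f i < f j) ->
  (i <= j)%nat -> (j < n)%nat -> f i <= f j.
Proof.
  intros Hf Hij Hj. destruct (Nat.eq_dec i j) as [-> | Hne]; [lra |].
  left; apply Hf; lia.
Qed.

Section Kinks.

Variables (Q : R) (I : nat) (d : nat -> R) (ihat : nat).
Hypotheses (Hd_incr : forall i j, (i < j)%nat -> (j < I)%nat -> d i < d j)
  (Hihat_lt : (ihat + 1 < I)%nat) (Hihat : d ihat < Q <= d (ihat + 1)%nat).

Let d_le i j : (i <= j)%nat -> (j < I)%nat -> d i <= d j :=
  strictly_increasing_le d I i j Hd_incr.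

Lemma no_kink_first : no_kink d Q I 0 (d (S ihat) - Q).
Proof.
  intros i Hi. destruct (Nat.le_gt_cases i ihat).
  - left. pose proof (d_le i ihat ltac:(lia) ltac:(lia)). lra.
  - right. pose proof (d_le (S ihat) i ltac:(lia) ltac:(lia)). lra.
Qed.

Lemma no_kink_consecutive j : (S j < I)%nat -> no_kink d Q I (d j - Q) (d (S j) - Q).
Proof.
  intros Hj i Hi. destruct (Nat.le_gt_cases i j).
  - left. pose proof (d_le i j ltac:(lia) ltac:(lia)). lra.
  - right. pose proof (d_le (S j) i ltac:(lia) ltac:(lia)). lra.
Qed.

Lemma argmax_on_halfline (U : R -> R) (crit : R -> Prop) :
  (forall a b, 0 <= a <= b -> b <= d (I - 1)%nat - Q -> no_kink d Q I a b ->
     exists c, (c = a \/ c = b \/ crit c) /\ forall q, a <= q <= b -> U q <= U c) ->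
  (forall q, d (I - 1)%nat - Q <= q -> U q <= U (d (I - 1)%nat - Q)) ->
  exists qs, ((exists i, (ihat < i < I)%nat /\ qs = d i - Q) \/ crit qs \/ qs = 0) /\
    forall q, 0 <= q -> U q <= U qs.
Proof.
  intros Hpiece Htail.
  set (good qs := (exists i, (ihat < i < I)%nat /\ qs = d i - Q) \/ crit qs \/ qs = 0).
  assert (Hkink_good : forall i, (ihat < i < I)%nat -> good (d i - Q))
    by (intros i Hi; left; exists i; auto).
  assert (Hkink_le_last : forall i, (i < I)%nat -> d i - Q <= d (I - 1)%nat - Q)
    by (intros i Hi; pose proof (d_le i (I - 1) ltac:(lia) ltac:(lia)); lra).
  assert (HQ_first : Q <= d (S ihat)) by (rewrite <- Nat.add_1_r; lra).
  assert (Hprefix : forall i, (ihat < i < I)%nat ->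
            exists c, good c /\ forall q, 0 <= q <= d i - Q -> U q <= U c).
  { induction i as [| j IH]; intros Hi; [lia |].
    destruct (Nat.eq_dec j ihat) as [-> | Hj].
    - destruct (Hpiece 0 (d (S ihat) - Q)) as [c [Hc Hmax]];
        [lra | apply Hkink_le_last; lia | apply no_kink_first |].
      exists c. split; [| exact Hmax].
      destruct Hc as [-> | [-> | Hc]]; [right; right | apply Hkink_good; lia | right; left]; auto.
    - destruct (IH ltac:(lia)) as [c1 [Hc1 Hmax1]].
      pose proof (d_le (S ihat) j ltac:(lia) ltac:(lia)).
      pose proof (d_le j (S j) ltac:(lia) ltac:(lia)).
      destruct (Hpiece (d j - Q) (d (S j) - Q)) as [c2 [Hc2 Hmax2]];
        [lra | apply Hkink_le_last; lia | apply no_kink_consecutive; lia |].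
      assert (Hgood2 : good c2).
      { destruct Hc2 as [-> | [-> | Hc2]]; [apply Hkink_good; lia | apply Hkink_good; lia |].
        right; left; exact Hc2. }
      destruct (argmax_union U good (fun q => 0 <= q <= d j - Q)
                  (fun q => d j - Q <= q <= d (S j) - Q) c1 c2 Hc1 Hgood2 Hmax1 Hmax2)
        as [c [Hc Hmax]].
      exists c. split; [exact Hc |]. intros q Hq. apply Hmax.
      destruct (Rle_dec q (d j - Q)); [left | right]; lra. }
  destruct (Hprefix (I - 1)%nat ltac:(lia)) as [c1 [Hc1 Hmax1]].
  assert (Hgood_last : good (d (I - 1)%nat - Q)) by (apply Hkink_good; lia).
  destruct (argmax_union U good (fun q => 0 <= q <= d (I - 1)%nat - Q)
              (fun q => d (I - 1)%nat - Q <= q) c1 _ Hc1 Hgood_last Hmax1 Htail)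
    as [c [Hc Hmax]].
  exists c. split; [exact Hc |]. intros q Hq. apply Hmax.
  destruct (Rle_dec q (d (I - 1)%nat - Q)); [left | right]; lra.
Qed.

End Kinks.

Theorem theorem1
  (kappa Q : R) (I : nat) (d p : nat -> R) (ihat : nat)
  (beta lambda mu pis : R)
  (Hkappa : 0 < kappa) (HQ : 0 < Q) (HI : (2 <= I)%nat)
  (Hd_incr : forall i j, (i < j)%nat -> (j < I)%nat -> d i < d j)
  (Hp_pos : forall i, (i < I)%nat -> 0 < p i)
  (Hp_sum : sumI I p = 1)
  (HQ1 : d 0%nat < Q) (HQI : Q < d (I - 1)%nat)
  (Hihat_lt : (ihat + 1 < I)%nat)
  (Hihat : d ihat < Q <= d (ihat + 1)%nat)
  (Hbeta : 0 < beta <= 1) (Hlambda : 1 <= lambda) (Hmu : 0 < mu <= 1)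
  (Hpis : 0 < pis < kappa) :
  (* (i) high reference point R_p = 0 *)
  (exists qs : R,
      ((exists i, (ihat < i < I)%nat /\ qs = d i - Q) \/ qs = 0) /\
      forall qb : R, 0 <= qb ->
        Ubuy kappa Q I d p beta lambda mu pis 0 qb
        <= Ubuy kappa Q I d p beta lambda mu pis 0 qs)
  /\
  (* (ii) low reference point R_p = kappa (Q - d_I) *)
  (exists qs : R,
      ((exists i, (ihat < i < I)%nat /\ qs = d i - Q)
       \/ (0 < qs /\
           derivable_pt_lim
             (Ubuy kappa Q I d p beta lambda mu pis (kappa * (Q - d (I - 1)%nat)))
             qs 0)
       \/ qs = 0) /\
      forall qb : R, 0 <= qb ->
        Ubuy kappa Q I d p beta lambda mu pis (kappa * (Q - d (I - 1)%nat)) qb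
        <= Ubuy kappa Q I d p beta lambda mu pis (kappa * (Q - d (I - 1)%nat)) qs).
Proof.
  assert (Hlam : 0 <= lambda) by lra.
  assert (Hlast : forall i, (i < I)%nat -> d i <= d (I - 1)%nat)
    by (intros i Hi; apply (strictly_increasing_le d I); auto; lia).
  assert (Htail : forall Rp q, d (I - 1)%nat - Q <= q ->
            Ubuy kappa Q I d p beta lambda mu pis Rp q
            <= Ubuy kappa Q I d p beta lambda mu pis Rp (d (I - 1)%nat - Q)).
  { intros Rp q Hq. apply Ubuy_nonincreasing_beyond_kinks; try lra.
    intros i Hi. specialize (Hlast i Hi). lra. }
  split.
  - destruct (argmax_on_halfline Q I d ihat Hd_incr Hihat_lt Hihat
                (Ubuy kappa Q I d p beta lambda mu pis 0) (fun _ => False))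
      as [qs [Hqs Hmax]]; [| apply Htail | exists qs; split; [tauto | exact Hmax]].
    intros a b Hab _ Hkinks.
    destruct (Ubuy_argmax_piece_high kappa Q I d p beta lambda mu pis Hkappa Hpis Hbeta Hlam
                a b Hab Hkinks) as [c [Hc Hmax]].
    exists c. split; [tauto | exact Hmax].
  - apply (argmax_on_halfline Q I d ihat Hd_incr Hihat_lt Hihat); [| apply Htail].
    intros a b Hab Hb Hkinks.
    destruct (Ubuy_argmax_piece_low kappa Q I d p beta lambda mu pis Hkappa Hpis Hbeta
                (d (I - 1)%nat) a b Hlast Hab Hb Hkinks) as [c [Hc Hmax]].
    exists c. split; [| exact Hmax].
    destruct Hc as [-> | [-> | [Hc Hder]]]; [left | right; left | right; right; split]; auto; lra.
Qed.
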